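(* Let $p$ and $q$ be two different odd primes and let $a\in(\mathbb{Z}/pq\mathbb{Z})^*$ be such that $a\bmod p$ generates $(\mathbb{Z}/p\mathbb{Z})^*$ and $a^{(p-1)/2}\equiv-1\pmod{pq}$. Let $S=S_{pq}(a)$ and $\lambda=|S\cap(S+1)|$. If $\lambda\equiv-2\pmod q$, then with $t=(\lambda+2)/q$ and any permutations $\pi_2,\dots,\pi_t$ of $\{1,\dots,p\}$, the graph $F_{(\pi_2,\dots,\pi_t)}(\Gamma_{pq}(a))$ is a Neumaier graph with parameters $(tpq,\,p+\lambda,\,\lambda;\,1,\,\lambda+2)$.
   Context: $S_{pq}(a)=\{a^j: 0\le j<p-1\}\subseteq\mathbb{Z}/pq\mathbb{Z}$, and $\Gamma_{pq}(a)$ is the Cayley graph on $(\mathbb{Z}/pq\mathbb{Z},+)$ with connection set $S_{pq}(a)$ ($x\sim y$ iff $x-y\in S_{pq}(a)$); $S+1=\{s+1:s\in S\}$. Its vertex set is partitioned into the $p$ cosets $C_1,\dots,C_p$ (in some fixed order) of the additive subgroup generated by $p$. Construction $F$: take $t$ disjoint copies $\Gamma_1,\dots,\Gamma_t$ of $\Gamma_{pq}(a)$, with $C_{i,r}$ the copy of $C_r$ in $\Gamma_i$, and set $\pi_1=\mathrm{id}$; $F_{(\pi_2,\dots,\pi_t)}(\Gamma_{pq}(a))$ has vertex set the union of the copies, and distinct $x\in C_{i,k'}$, $y\in C_{j,l'}$ are adjacent iff ($i=j$ and $x\sim y$ in $\Gamma_i$) or $\pi_i^{-1}(k')=\pi_j^{-1}(l')$.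 A regular graph is $\lambda$-edge-regular if it has at least one edge and any two adjacent vertices have exactly $\lambda$ common neighbours. A Neumaier graph with parameters $(v,k,\lambda;e,s)$ is a non-complete $k$-regular, $\lambda$-edge-regular graph on $v$ vertices containing a clique of size $s$ such that every vertex outside it has exactly $e>0$ neighbours in it. *)

From HB Require Import structures.
From mathcomp Require Import all_boot all_order all_algebra all_fingroup.

Import GRing.Theory.
Local Open Scope ring_scope.

Definition k_regular (T : finType) (e : rel T) (k : nat) : Prop :=
  forall x : T, #|[set y | e x y]| = k.

Definition edge_regular (T : finType) (e : rel T) (lam : nat) : Prop :=
  (exists x y : T, e x y) /\
  (forall x y : T, e x y -> #|[set z | e x z && e y z]| = lam).

Definition is_clique (T : finType) (e : rel T) (C : {set T}) : Prop :=
  {in C &, forall x y, x != y -> e x y}.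

Definition neumaier (T : finType) (e : rel T) (v k lam ee s : nat) : Prop :=
  [/\ symmetric e, irreflexive e, #|T| = v, k_regular T e k & edge_regular T e lam]
  /\ (exists x y : T, x != y /\ ~~ e x y)
  /\ (0 < ee)%N
  /\ (exists C : {set T}, [/\ #|C| = s, is_clique T e C &
        forall x, x \notin C -> #|[set y in C | e x y]| = ee]).

Definition Sset (p q : nat) (a : 'Z_(p * q)) : {set 'Z_(p * q)} :=
  [set a ^+ (nat_of_ord j) | j : 'I_(p.-1)].

Definition lam (p q : nat) (a : 'Z_(p * q)) : nat :=
  #|Sset p q a :&: [set s + 1 | s in Sset p q a]|.

Definition tpar (p q : nat) (a : 'Z_(p * q)) : nat := ((lam p q a + 2) %/ q)%N.

(* the coset of <p> in Z/pqZ containing x, identified with x mod p *)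
Definition coset_of_x (p q : nat) (x : 'Z_(p * q)) : 'Z_p := (nat_of_ord x)%:R.

Definition generates_mod (p q : nat) (a : 'Z_(p * q)) : Prop :=
  forall x : 'Z_p, x != 0 -> exists j : nat, ((nat_of_ord a)%:R : 'Z_p) ^+ j = x.

(* Construction F: vertices (i, x) = copy of x in Gamma_{i}; cosets are
   labelled by sigma (the fixed order C_1..C_p), pi i are the permutations
   (pi of the first copy is the identity). *)
Definition Fadj (p q : nat) (a : 'Z_(p * q)) (t : nat) (sigma : {perm 'Z_p})
  (pi : 'I_t -> {perm 'Z_p}) : rel ('I_t * 'Z_(p * q)) :=
  fun u v =>
    (u != v) &&
    (((u.1 == v.1) && (u.2 - v.2 \in Sset p q a)) ||
     ((pi u.1)^-1%g (sigma (coset_of_x p q u.2)) ==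
      (pi v.1)^-1%g (sigma (coset_of_x p q v.2)))).

From mathcomp Require Import all_boot all_order all_algebra all_fingroup.
From mathcomp Require Import zify ring.
Import GRing.Theory.
Set Implicit Arguments.
Unset Strict Implicit.
Local Open Scope ring_scope.

(* Write N = pq, rho : Z/NZ -> Z/pZ for reduction mod p (its fibres are the
   p cosets of <p>, each of size q) and S = {a^j : j < p-1}.  Because
   a^((p-1)/2) = -1, S is a subgroup of the units containing -1; because
   a mod p generates (Z/pZ)^*, rho maps S bijectively onto the non-zero
   residues.  Two facts about Gamma = Cay(Z/NZ, S) follow:
   - adjacent x, y have exactly lam = |S cap (S+1)| common neighbours, by
     the affine substitution z = x - (x - y) w;
   - a vertex x has exactly one neighbour in each coset other than its own,
     since x - s runs once through every non-zero class mod p.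
   In F, every vertex (i, x) gets the label pi_i^-1(sigma(rho x)); the
   vertices with a given label form a clique of size tq, and F is the union
   of the t copies of Gamma with these p cliques.  Counting neighbours then
   gives degree (p-1) + (tq-1), lam or tq-2 common neighbours, and a label
   class sees every outside vertex exactly once.  With tq = lam + 2 these
   are the announced Neumaier parameters.  The argument only uses p > 1 odd
   and q > 0. *)

Section ReductionModP.
Variables (p q : nat).
Hypotheses (p_gt1 : (1 < p)%N) (q_gt0 : (0 < q)%N).

Local Notation rho := (coset_of_x p q).

Lemma pq_gt1 : (1 < p * q)%N. Proof. lia. Qed.

Lemma card_Zpq : #|'Z_(p * q)| = (p * q)%N.
Proof. by rewrite card_ord Zp_cast // pq_gt1. Qed.

Lemma rho_natr n : rho (n%:R : 'Z_(p * q)) = n%:R.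
Proof.
rewrite /coset_of_x val_Zp_nat ?pq_gt1 //.
by rewrite -(Zp_nat_mod p_gt1) modn_dvdm ?dvdn_mulr // Zp_nat_mod.
Qed.

Lemma rhoD x y : rho (x + y) = rho x + rho y.
Proof. by rewrite -[x]natr_Zp -[y]natr_Zp -natrD !rho_natr natrD. Qed.

Lemma rhoM x y : rho (x * y) = rho x * rho y.
Proof. by rewrite -[x]natr_Zp -[y]natr_Zp -natrM !rho_natr natrM. Qed.

Lemma rho1 : rho 1 = 1.
Proof. by have := rho_natr 1; rewrite !mulr1n. Qed.

Lemma rhoB x y : rho (x - y) = rho x - rho y.
Proof. by apply/eqP; rewrite eq_sym subr_eq -rhoD subrK. Qed.

Lemma rhoX x n : rho (x ^+ n) = rho x ^+ n.
Proof. by elim: n => [|n IH]; rewrite ?expr0 ?rho1 // !exprS rhoM IH. Qed.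

Lemma rho_lift (r : 'Z_p) : rho ((r : nat)%:R : 'Z_(p * q)) = r.
Proof. by rewrite rho_natr natr_Zp. Qed.

(* Every coset of <p> has q elements: the fibres of rho are translates of
   one another and partition the pq residues into p classes. *)
Lemma fibre_card (r : 'Z_p) : #|[set x : 'Z_(p * q) | rho x == r]| = q.
Proof.
have fibre_shift r' : #|[set x : 'Z_(p * q) | rho x == r']| =
                      #|[set x : 'Z_(p * q) | rho x == 0]|.
  set L : 'Z_(p * q) := (r' : nat)%:R.
  have -> : [set x : 'Z_(p * q) | rho x == r'] =
            [set x + L | x in [set x : 'Z_(p * q) | rho x == 0]].
    apply/setP => y; rewrite inE; apply/eqP/imsetP => [h|[x]].
      by exists (y - L); rewrite ?subrK // inE rhoB h rho_lift subrr.
    by rewrite inE => /eqP h ->; rewrite rhoD h rho_lift add0r.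
  by rewrite card_imset //; apply: addIr.
have partition : #|'Z_(p * q)| =
    (\sum_(r' : 'Z_p) #|[set x : 'Z_(p * q) | rho x == r']|)%N.
  rewrite -sum1_card (partition_big rho xpredT) //=.
  by apply: eq_bigr => r' _; rewrite -sum1_card; apply: eq_bigl => x; rewrite inE.
move: partition; under eq_bigr do rewrite fibre_shift.
have card_Zp : #|'Z_p| = p by rewrite card_ord Zp_cast.
rewrite card_Zpq sum_nat_const card_Zp fibre_shift => /eqP.
by rewrite eqn_pmul2l ?(ltnW p_gt1) // => /eqP.
Qed.

End ReductionModP.

Section ConnectionSet.
Variables (p q : nat) (a : 'Z_(p * q)).
Hypotheses (p_gt1 : (1 < p)%N) (p_odd : odd p) (a_half : a ^+ (p.-1)./2 = -1).

Local Notation S := (Sset p q a).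

Lemma expr_period : a ^+ p.-1 = 1.
Proof.
have -> : p.-1 = ((p.-1)./2 * 2)%N by rewrite -(odd_halfK p_odd) doubleK muln2.
by rewrite exprM a_half expr2 mulrNN mulr1.
Qed.

Lemma Sset_expr j : a ^+ j \in S.
Proof.
have pm1_gt0 : (0 < p.-1)%N by lia.
rewrite (divn_eq j p.-1) exprD (mulnC (j %/ p.-1)%N) exprM expr_period expr1n mul1r.
by apply/imsetP; exists (Ordinal (ltn_pmod j pm1_gt0)).
Qed.

Lemma SsetP x : reflect (exists j, x = a ^+ j) (x \in S).
Proof.
by apply: (iffP idP) => [/imsetP[j _ ->]|[j ->]]; [exists j | exact: Sset_expr].
Qed.

Lemma Sset_mul x y : x \in S -> y \in S -> x * y \in S.
Proof. by move=> /SsetP[i ->] /SsetP[j ->]; rewrite -exprD Sset_expr. Qed.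

Lemma SsetN x : (- x \in S) = (x \in S).
Proof.
have SN y : y \in S -> - y \in S.
  by move=> yS; rewrite -mulN1r Sset_mul // -a_half Sset_expr.
by apply/idP/idP => [/SN|/SN//]; rewrite opprK.
Qed.

Lemma Sset_unit x : x \in S -> x \is a GRing.unit /\ x^-1 \in S.
Proof.
case/SsetP => j ->.
have inv_r : a ^+ j * a ^+ (j * (p.-1).-1) = 1.
  rewrite -exprD; have -> : (j + j * (p.-1).-1 = p.-1 * j)%N by nia.
  by rewrite exprM expr_period expr1n.
have unit_aj : a ^+ j \is a GRing.unit.
  by apply/unitrP; exists (a ^+ (j * (p.-1).-1)); rewrite inv_r mulrC inv_r.
split => //; rewrite -[_^-1]mulr1 -inv_r mulrA mulVr // mul1r.
exact: Sset_expr.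
Qed.

(* Adjacent vertices of Gamma = Cay(Z/pqZ, S) have lam common neighbours:
   with d = x - y in S, z |-> (x - z)/d maps the common neighbourhood of x
   and y bijectively onto S cap (S+1). *)
Lemma common_nbrs_Cayley x y : x - y \in S ->
  #|[set z : 'Z_(p * q) | (x - z \in S) && (y - z \in S)]| = lam p q a.
Proof.
move=> dS; set d := x - y; have [d_unit dVS] := Sset_unit dS.
have mem_shift w : (w \in [set s + 1 | s in S]) = (w - 1 \in S).
  apply/imsetP/idP => [[s sS ->]|h]; first by rewrite addrK.
  by exists (w - 1); rewrite ?subrK.
have -> : [set z : 'Z_(p * q) | (x - z \in S) && (y - z \in S)] =
          (fun w => x - d * w) @: (S :&: [set s + 1 | s in S]).
  apply/setP => z; rewrite inE; apply/idP/imsetP.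
    case/andP => xzS yzS; exists (d^-1 * (x - z)).
      rewrite inE mem_shift (Sset_mul dVS xzS) /=.
      have -> : d^-1 * (x - z) - 1 = d^-1 * (y - z).
        by rewrite -(mulVr d_unit) -mulrBr /d; congr (_ * _); ring.
      exact: Sset_mul dVS yzS.
    by rewrite mulrA mulrV // mul1r; ring.
  case=> w; rewrite inE mem_shift => /andP[wS w1S] ->.
  have -> : x - (x - d * w) = d * w by ring.
  have -> : y - (x - d * w) = d * (w - 1) by rewrite /d; ring.
  by rewrite !Sset_mul.
rewrite card_in_imset // => w1 w2 _ _ h.
by apply: (mulrI d_unit); apply: oppr_inj; apply: (addrI x).
Qed.

Hypotheses (q_gt0 : (0 < q)%N) (a_gen : generates_mod p q a).

Local Notation rho := (coset_of_x p q).

Lemma rho_Sset : rho @: S = [set~ 0] /\ #|S| = p.-1.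
Proof.
have onto : [set~ (0 : 'Z_p)] \subset rho @: S.
  apply/subsetP => r; rewrite !inE => /a_gen[j <-].
  by rewrite -rhoX // imset_f // Sset_expr.
have card_nz : #|[set~ (0 : 'Z_p)]| = p.-1 by rewrite cardsC1 card_ord Zp_cast.
have le_img : (#|rho @: S| <= #|S|)%N := leq_imset_card _ _.
have le_S : (#|S| <= p.-1)%N by rewrite (leq_trans (leq_imset_card _ _)) ?card_ord.
have := subset_leq_card onto; rewrite card_nz => ge_img.
split; last by lia.
by apply/eqP; rewrite eq_sym eqEcard onto card_nz; lia.
Qed.

Lemma card_Sset : #|S| = p.-1. Proof. by case: rho_Sset. Qed.

Lemma rho_Sset_inj : {in S &, injective rho}.
Proof.
by apply/imset_injP; case: rho_Sset => -> ->; rewrite cardsC1 card_ord Zp_cast.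
Qed.

Lemma rho_Sset_neq0 x : x \in S -> rho x != 0.
Proof.
move=> xS; have : rho x \in rho @: S by apply: imset_f.
by case: rho_Sset => -> _; rewrite !inE.
Qed.

Lemma rho_Sset_onto r : r != 0 -> exists2 s, s \in S & rho s = r.
Proof.
move=> r0; have : r \in rho @: S by case: rho_Sset => -> _; rewrite !inE.
by case/imsetP => s sS ->; exists s.
Qed.

Section ConstructionF.
Variables (t : nat) (sigma : {perm 'Z_p}) (pi : 'I_t -> {perm 'Z_p}).

Local Notation T := ('I_t * 'Z_(p * q))%type.
Local Notation e := (Fadj p q a t sigma pi).

Definition label (u : T) : 'Z_p := (pi u.1)^-1%g (sigma (rho u.2)).

Definition copy_adj (u v : T) : bool := (u.1 == v.1) && (u.2 - v.2 \in S).

Definition label_class (c : 'Z_p) : {set T} := [set v | label v == c].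

Definition copy_nbhd (u : T) : {set T} := [set v | copy_adj u v].

Lemma FadjE u v : e u v = (u != v) && (copy_adj u v || (label u == label v)).
Proof. by []. Qed.

Lemma copy_adj_sym u v : copy_adj u v = copy_adj v u.
Proof. by rewrite /copy_adj eq_sym -SsetN // opprB. Qed.

Lemma label_pairE (i : 'I_t) x c : (label (i, x) == c) = (rho x == sigma^-1%g (pi i c)).
Proof. by rewrite /label /=; apply/eqP/eqP => [<-|->]; rewrite ?permKV ?permK. Qed.

Lemma label_same_copy u v : u.1 = v.1 -> (label u == label v) = (rho u.2 == rho v.2).
Proof.
move=> same_copy; rewrite /label same_copy.
by apply/eqP/eqP => [/perm_inj/perm_inj //|-> //].
Qed.

Lemma copy_adj_label u v : copy_adj u v -> label u != label v.
Proof.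
case/andP => /eqP same_copy uvS; rewrite label_same_copy // -subr_eq0 -rhoB //.
exact: rho_Sset_neq0.
Qed.

Lemma copy_adj_neq u v : copy_adj u v -> u != v.
Proof. by move/copy_adj_label; apply: contraNneq => ->. Qed.

Lemma copy_adj_unique w z y : copy_adj w z -> copy_adj w y -> label z = label y -> z = y.
Proof.
case/andP => /eqP wz1 wzS /andP[/eqP wy1 wyS] /eqP.
rewrite label_same_copy -?wz1 -?wy1 // => /eqP same_rho.
have : w.2 - z.2 = w.2 - y.2 by apply: rho_Sset_inj; rewrite // !rhoB // same_rho.
move=> /addrI /oppr_inj z2y2.
by case: z y wz1 wy1 z2y2 {wzS wyS same_rho} => [? ?] [? ?] /= <- <- ->.
Qed.

Lemma card_label_class c : #|label_class c| = (t * q)%N.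
Proof.
rewrite -sum1_card.
rewrite (eq_bigl (fun v : T => predT v.1 && (label (v.1, v.2) == c))); last first.
  by move=> [i x]; rewrite inE.
rewrite -(pair_big_dep predT (fun i x => label (i, x) == c) (fun _ _ => 1%N)) /=.
rewrite (eq_bigr (fun _ => q)) ?sum_nat_const ?card_ord // => i _.
rewrite sum1_card -[RHS](fibre_card p_gt1 q_gt0 (sigma^-1%g (pi i c))).
by apply: eq_card => x; rewrite inE -label_pairE.
Qed.

Lemma card_copy_nbhd u : #|copy_nbhd u| = p.-1.
Proof.
rewrite -card_Sset.
have -> : copy_nbhd u = (fun s => (u.1, u.2 - s)) @: S.
  apply/setP => v; rewrite inE; apply/idP/imsetP.
    case/andP => /eqP same_copy uvS; exists (u.2 - v.2) => //.
    by rewrite opprB addrC subrK same_copy; case: v {same_copy uvS}.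
  by case=> s sS ->; rewrite /copy_adj /= eqxx opprB addrC subrK.
rewrite card_imset // => s1 s2 /(congr1 snd) /= /addrI.
exact: oppr_inj.
Qed.

Lemma Fnbhd u : [set v | e u v] = copy_nbhd u :|: (label_class (label u) :\ u).
Proof.
apply/setP => v; rewrite !inE FadjE.
case: (boolP (copy_adj u v)) => [/copy_adj_neq -> //|_] /=.
by rewrite eq_sym (eq_sym (label v)).
Qed.

Lemma Fadj_degree u : #|[set v | e u v]| = (p.-1 + (t * q).-1)%N.
Proof.
have disjoint : copy_nbhd u :&: (label_class (label u) :\ u) = set0.
  apply/setP => v; rewrite !inE; apply/negP => /and3P[uv _ /eqP same_label].
  by move: (copy_adj_label uv); rewrite same_label eqxx.
rewrite Fnbhd cardsU disjoint cards0 subn0 card_copy_nbhd.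
have u_class : u \in label_class (label u) by rewrite inE.
by have := card_label_class (label u); rewrite (cardsD1 u (label_class _)) u_class => <-.
Qed.

(* Adjacent vertices with the same label: their common neighbours are the
   other tq - 2 vertices of the label class. *)
Lemma common_nbrs_same_label u v : e u v -> label u = label v ->
  #|[set z | e u z && e v z]| = (t * q).-2.
Proof.
move=> /andP[uv _] same_label.
have -> : [set z | e u z && e v z] = label_class (label u) :\ u :\ v.
  apply/setP => z; rewrite !inE !FadjE.
  case: (boolP (label u == label z)) => uz.
    rewrite -same_label uz !orbT !andbT (eq_sym (label z)) uz andbT.
    by rewrite (eq_sym z v) (eq_sym z u) andbC.
  rewrite (eq_sym (label z)) (negbTE uz) !andbF -same_label (negbTE uz) !orbF.
  apply/negP => /and3P[/andP[_ uzA] _ vzA].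
  rewrite copy_adj_sym in uzA; rewrite copy_adj_sym in vzA.
  by move/negP: uv; apply; apply/eqP; exact: (copy_adj_unique uzA vzA same_label).
have u_class : u \in label_class (label u) by rewrite inE.
have v_class : v \in label_class (label u) :\ u.
  by rewrite !inE eq_sym uv same_label eqxx.
have := card_label_class (label u).
by rewrite (cardsD1 u (label_class _)) u_class (cardsD1 v (_ :\ u)) v_class => <-.
Qed.

(* Adjacent vertices with different labels lie in one copy, and a common
   neighbour cannot use the clique edge to either of them, so their common
   neighbours are those of Gamma. *)
Lemma common_nbrs_diff_label u v : e u v -> label u != label v ->
  #|[set z | e u z && e v z]| = lam p q a.
Proof.
move=> euv uv_label.
have uvA : copy_adj u v by move: euv; rewrite FadjE (negbTE uv_label) orbF => /andP[].
have vuA : copy_adj v u by rewrite copy_adj_sym.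
have -> : [set z | e u z && e v z] = (fun y => (u.1, y)) @:
            [set y : 'Z_(p * q) | (u.2 - y \in S) && (v.2 - y \in S)].
  apply/setP => z; rewrite !inE !FadjE; apply/idP/imsetP.
    move=> /andP[/andP[uz uzE] /andP[vz vzE]].
    have uzA : copy_adj u z.
      case/orP: uzE => // /eqP uz_label.
      move: vzE; rewrite -uz_label eq_sym (negbTE uv_label) orbF => vzA.
      by move: uz; rewrite (copy_adj_unique vzA vuA (esym uz_label)) eqxx.
    have vzA : copy_adj v z.
      case/orP: vzE => // /eqP vz_label.
      by move: vz; rewrite (copy_adj_unique uzA uvA (esym vz_label)) eqxx.
    case/andP: uzA => /eqP uz1 uzS; case/andP: vzA => _ vzS.
    exists z.2; first by rewrite inE uzS vzS.
    by rewrite uz1; case: z {uz uzE vz vzE uz1 uzS vzS}.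
  case=> y; rewrite inE => /andP[uyS vyS] ->.
  have uyA : copy_adj u (u.1, y) by rewrite /copy_adj eqxx.
  have vyA : copy_adj v (u.1, y) by case/andP: uvA => /eqP -> _; rewrite /copy_adj eqxx.
  by rewrite uyA vyA (copy_adj_neq uyA) (copy_adj_neq vyA).
rewrite card_imset; last by move=> y1 y2 [].
by apply: common_nbrs_Cayley => //; case/andP: uvA.
Qed.

(* A vertex x outside a label class has exactly one neighbour in it: the
   unique copy-neighbour x - s with s in S lying in the required coset. *)
Lemma outside_label_class c x : x \notin label_class c ->
  #|[set y in label_class c | e x y]| = 1%N.
Proof.
rewrite inE => x_label.
have [s sS rho_s] : exists2 s, s \in S & rho s = rho x.2 - sigma^-1%g (pi x.1 c).
  apply: rho_Sset_onto => //; rewrite subr_eq0.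
  by apply: contra x_label; case: x => i y; rewrite label_pairE.
pose y0 : T := (x.1, x.2 - s).
have xy0 : copy_adj x y0 by rewrite /copy_adj /= eqxx opprB addrC subrK.
have y0_label : label y0 == c by rewrite label_pairE rhoB // rho_s opprB addrC subrK.
rewrite (_ : [set y in label_class c | e x y] = [set y0]) ?cards1 //.
apply/setP => y; rewrite !inE; apply/andP/eqP => [[y_label]|->]; last first.
  by rewrite FadjE xy0 (copy_adj_neq xy0).
rewrite FadjE => /andP[_ /orP[xy|/eqP same_label]]; last first.
  by move: x_label; rewrite same_label y_label.
by apply: (copy_adj_unique xy xy0); rewrite (eqP y_label) (eqP y0_label).
Qed.

Lemma Fadj_sym : symmetric e.
Proof. by move=> x y; rewrite !FadjE eq_sym copy_adj_sym (eq_sym (label x)). Qed.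

Lemma Fadj_irrefl : irreflexive e.
Proof. by move=> x; rewrite FadjE eqxx. Qed.

Lemma label_class_clique c : is_clique _ e (label_class c).
Proof.
move=> x y; rewrite !inE => /eqP x_label /eqP y_label xy.
by rewrite FadjE xy x_label y_label eqxx orbT.
Qed.

Hypothesis tq_lam : (t * q = lam p q a + 2)%N.

Lemma card_F : #|{: T}| = (t * p * q)%N.
Proof. by rewrite card_prod card_ord card_Zpq ?mulnA. Qed.

Lemma t_gt0 : (0 < t)%N.
Proof. by case: t tq_lam => [|//]; rewrite mul0n addn2. Qed.

Lemma F_regular : k_regular _ e (p + lam p q a).
Proof. by move=> u; rewrite Fadj_degree tq_lam; lia. Qed.

Lemma F_edge_regular : edge_regular _ e (lam p q a).
Proof.
split.
  pose u0 : T := (Ordinal t_gt0, 0).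
  have : (0 < #|[set v | e u0 v]|)%N by rewrite F_regular; lia.
  by case/card_gt0P => y; rewrite inE => u0y; exists u0, y.
move=> x y xy; have [/eqP same|diff] := boolP (label x == label y).
  by rewrite common_nbrs_same_label // tq_lam; lia.
exact: common_nbrs_diff_label.
Qed.

(* F is not complete: its p(lam + 2) vertices outnumber 1 + (p + lam). *)
Lemma F_noncomplete : exists x y : T, x != y /\ ~~ e x y.
Proof.
pose u0 : T := (Ordinal t_gt0, 0).
have : (0 < #|~: (u0 |: [set v | e u0 v])|)%N.
  have := cardsC (u0 |: [set v | e u0 v]); rewrite card_F.
  have : (#|u0 |: [set v | e u0 v]| <= 1 + (p + lam p q a))%N.
    by rewrite cardsU1 F_regular; case: (u0 \notin _).
  have : (t * p * q = p * (lam p q a + 2))%N by rewrite mulnAC tq_lam mulnC.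
  nia.
case/card_gt0P => y; rewrite !inE negb_or => /andP[y_u0 u0y].
by exists u0, y; rewrite eq_sym.
Qed.

Lemma neumaier_F :
  neumaier _ e (t * p * q)%N (p + lam p q a)%N (lam p q a) 1%N (lam p q a + 2)%N.
Proof.
split; first by split; [exact: Fadj_sym | exact: Fadj_irrefl | exact: card_F
                       | exact: F_regular | exact: F_edge_regular].
split; first exact: F_noncomplete.
split=> //; exists (label_class 0); split.
- by rewrite card_label_class.
- exact: label_class_clique.
- exact: outside_label_class.
Qed.

End ConstructionF.

End ConnectionSet.

Theorem mainTheorem6 (p q : nat) (a : 'Z_(p * q)) (sigma : {perm 'Z_p})
  (pi : 'I_(tpar p q a) -> {perm 'Z_p}) :
  prime p -> prime q -> odd p -> odd q -> p != q ->
  a \is a GRing.unit ->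
  generates_mod p q a ->
  a ^+ (p.-1)./2 = -1 ->
  (lam p q a + 2 = 0 %[mod q])%N ->
  (forall i : 'I_(tpar p q a), nat_of_ord i = 0%N -> pi i = 1%g) ->
  neumaier _ (Fadj p q a (tpar p q a) sigma pi) (tpar p q a * p * q)%N (p + lam p q a)%N
    (lam p q a) 1%N (lam p q a + 2)%N.
Proof.
move=> p_prime q_prime p_odd _ _ _ a_gen a_half q_dvd _.
apply: neumaier_F => //; [exact: prime_gt1 | exact: prime_gt0 |].
by rewrite /tpar divnK //; apply/eqP; rewrite q_dvd mod0n.
Qed.
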